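(* Let $R$ be a commutative unital ring and equip $\mathfrak{FdgMod}_R$ with the model structure whose weak equivalences are the maps $f$ with $H^n(F^pf)$ an isomorphism for all $n\in\mathbb Z,p\in\mathbb N$, with generating cofibrations $I=\{S_R(n+1,p)\to D_R(n,p)\}$ and generating trivial cofibrations $J=\{0\to D_R(n,p)\}$. Then a morphism $p:(M,F)\to(N,F)$ is a trivial fibration if and only if, for every $k\in\mathbb N$, $F^kp:F^kM\to F^kN$ is degreewise surjective with acyclic kernel. In particular, $W\cap J\text{-inj}=I\text{-inj}$, where $W$ is the class of weak equivalences, $J$-inj the class of maps having the right lifting property with respect to $J$, and $I$-inj the class of maps having the right lifting property with respect to $I$.
   Context: $\mathfrak{FdgMod}_R$: filtered cochain complexes $(M,F)$ of $R$-modules, i.e. complexes with decreasing filtrations by subcomplexes $F^kM$ ($k\in\mathbb N$, $F^0M=M$), with filtration-preserving cochain maps. $D_R(n)$: $R$ in degrees $n,n+1$ with identity differential; $S_R(n)$: $R$ in degree $n$; $D_R(n,p)$, $S_R(n,p)$: these complexes filtered by $F^k=$ whole complex for $k\le p$ and $0$ for $k>p$; $S_R(n+1,p)\to D_R(n,p)$ the inclusion in degree $n+1$. *)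

From HB Require Import structures.
From mathcomp Require Import all_boot all_order all_algebra.
Unset Printing Implicit Defensive.
Import Order.TTheory GRing.Theory Num.Theory.
Local Open Scope ring_scope.

Record cpx (R : pzRingType) := Cpx {
  cobj :> int -> lmodType R;
  cd : forall n : int, {linear cobj n -> cobj (n + 1)};
  cdd : forall n (x : cobj n), cd (n + 1) (cd n x) = 0 }.

Record fcpx (R : pzRingType) := FCpx {
  fc :> cpx R;
  fil : nat -> forall n : int, pred (fc n);
  fil0 : forall n (x : fc n), fil 0 n x;
  fil_zero : forall k n, fil k n 0;
  fil_lin : forall k n a (x y : fc n), fil k n x -> fil k n y -> fil k n (a *: x + y);
  fil_d : forall k n (x : fc n), fil k n x -> fil k (n + 1) (@cd R fc n x);
  fil_dec : forall k n (x : fc n), fil k.+1 n x -> fil k n x }.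

Record fmor (R : pzRingType) (M N : fcpx R) := FMor {
  fm : forall n : int, {linear M n -> N n};
  fm_d : forall n (x : M n), fm (n + 1) (@cd R M n x) = @cd R N n (fm n x);
  fm_fil : forall k n (x : M n), @fil R M k n x -> @fil R N k n (fm n x) }.

Arguments cd {R} c n.
Arguments fil {R} f k n.
Arguments fm {R M N} f n.
Arguments fmor {R} M N.

Section Defs.
Variable R : pzRingType.

Definition RLP {A B : fcpx R} (i : fmor A B) {M N : fcpx R} (p : fmor M N) :=
  forall (a : fmor A M) (b : fmor B N),
    (forall n (x : A n), fm p n (fm a n x) = fm b n (fm i n x)) ->
    exists h : fmor B M,
      (forall n (x : A n), fm h n (fm i n x) = fm a n x) /\
      (forall n (x : B n), fm p n (fm h n x) = fm b n x).

(* Weak equivalence: H^m(F^p f) is an isomorphism for all m : int, p : nat.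
   (Cohomology in degree n+1, for all n : int, i.e. in every degree.)
   Injectivity and surjectivity of the induced map on cohomology are written
   out elementwise. *)
Definition weq {M N : fcpx R} (f : fmor M N) :=
  forall (p : nat) (n : int),
    (forall x : M (n + 1), fil M p (n + 1) x -> cd M (n + 1) x = 0 ->
       forall y : N n, fil N p n y -> fm f (n + 1) x = cd N n y ->
       exists z : M n, fil M p n z /\ cd M n z = x) /\
    (forall y : N (n + 1), fil N p (n + 1) y -> cd N (n + 1) y = 0 ->
       exists (x : M (n + 1)) (w : N n),
         [/\ fil M p (n + 1) x, cd M (n + 1) x = 0, fil N p n w &
             y = fm f (n + 1) x + cd N n w]).

Definition surj_acyclic_ker {M N : fcpx R} (f : fmor M N) :=
  forall k : nat,
    (forall n (y : N n), fil N k n y -> exists x : M n, fil M k n x /\ fm f n x = y) /\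
    (forall n (x : M (n + 1)), fil M k (n + 1) x -> fm f (n + 1) x = 0 ->
       cd M (n + 1) x = 0 ->
       exists z : M n, [/\ fil M k n z, fm f n z = 0 & cd M n z = x]).

(* ---- The complexes S_R(n,p), D_R(n,p), 0, built from row vectors:
   degree m carries 'rV[R]_(dim m) (dim m in {0,1}; 'rV_1 ~ R, 'rV_0 = 0),
   and every differential / structure map is right multiplication by the
   all-ones matrix (the identity when both sides are 'rV_1). *)

Lemma mulmx_dim0 a b c (x : 'rV[R]_a) (A : 'M[R]_(a, b)) (B : 'M[R]_(b, c)) :
  (a * b * c == 0)%N -> x *m A *m B = 0.
Proof.
case: a x A => [|a] x A; first by rewrite (thinmx0 x) !mul0mx.
case: b A B => [|b] A B; first by rewrite (thinmx0 A) mulmx0 mul0mx.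
by case: c B => [|c] B; [rewrite thinmx0 | rewrite !muln_eq0].
Qed.

Lemma mulmx_dim0' a c (x : 'rV[R]_a) (A B : 'M[R]_(a, c)) :
  (a * c == 0)%N -> x *m A = x *m B.
Proof.
case: a x A B => [|a] x A B; first by rewrite (thinmx0 x) !mul0mx.
by case: c A B => [|c] A B; [rewrite (thinmx0 (x *m A)) (thinmx0 (x *m B))|
  rewrite muln_eq0].
Qed.

Arguments mulmx_dim0 {a b c}.
Arguments mulmx_dim0' {a c}.

Definition rcpx (dim : int -> nat)
  (H : forall m, (dim m * dim (m + 1)%R * dim (m + 1 + 1)%R == 0)%N) : cpx R :=
  @Cpx R (fun m => 'rV[R]_(dim m))
    (fun m => mulmxr (const_mx 1 : 'M[R]_(dim m, dim (m + 1))))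
    (fun m x => mulmx_dim0 x _ _ (H m)).

Definition rfcpx (dim : int -> nat)
  (H : (forall m, (dim m * dim (m + 1)%R * dim (m + 1 + 1)%R == 0)%N)) (p : nat) : fcpx R.
Proof.
refine (@FCpx R (@rcpx dim H) (fun k m x => (k <= p)%N || (x == 0)) _ _ _ _ _).
- by move=> n x.
- by move=> k n; rewrite eqxx orbT.
- move=> k n a x y; case: (k <= p)%N => //= /eqP -> /eqP ->.
  by rewrite scaler0 addr0.
- move=> k n x /=; case: (k <= p)%N => //= /eqP ->; by rewrite mul0mx.
- move=> k n x /=; case: ltnP => [/ltnW ->//|_ /= ->]; by rewrite orbT.
Defined.

Definition rfmor (dimA : int -> nat) (HA : (forall m, (dimA m * dimA (m + 1)%R * dimA (m + 1 + 1)%R == 0)%N))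
  (dimB : int -> nat) (HB : (forall m, (dimB m * dimB (m + 1)%R * dimB (m + 1 + 1)%R == 0)%N)) (p : nat)
  (Hc : forall m, (dimA m * dimB (m + 1)%R == 0)%N) :
  fmor (@rfcpx dimA HA p) (@rfcpx dimB HB p).
Proof.
refine (@FMor R (@rfcpx dimA HA p) (@rfcpx dimB HB p)
  (fun m => mulmxr (const_mx 1 : 'M[R]_(dimA m, dimB m))) _ _).
- move=> n x /=; rewrite -!mulmxA; exact: mulmx_dim0'.
- move=> k n x /=; case: (k <= p)%N => //= /eqP ->; by rewrite mul0mx.
Defined.

Definition dimS (n : int) (m : int) : nat := (m == n).
Definition dimD (n : int) (m : int) : nat := (m == n) || (m == n + 1).
Definition dim0 (m : int) : nat := 0.

Lemma int1 (n : int) : (n + 1 == n) = false.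
Proof. by rewrite -[X in _ == X]addr0 (inj_eq (addrI n)) oner_eq0. Qed.
Lemma int2 (n : int) : (n + 1 + 1 == n) = false.
Proof. by rewrite -addrA -[X in _ == X]addr0 (inj_eq (addrI n)). Qed.
Lemma int2' (n : int) : (n + 1 + 1 == n + 1) = false.
Proof. by rewrite (inj_eq (addIr 1)) int1. Qed.

Lemma dimS_dd n m : (dimS n m * dimS n (m + 1)%R * dimS n (m + 1 + 1)%R == 0)%N.
Proof. by rewrite /dimS; case: (m =P n) => [->|] //=; rewrite int1. Qed.

Lemma dimD_dd n m : (dimD n m * dimD n (m + 1)%R * dimD n (m + 1 + 1)%R == 0)%N.
Proof.
rewrite /dimD; case: (m =P n) => [->|hm] /=; first by rewrite int2 int2' muln0.
case: (m =P n + 1) => [->|hm'] //=; by rewrite int2 int2' ?int1 /= ?muln0.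
Qed.

Lemma dim0_dd m : (dim0 m * dim0 (m + 1)%R * dim0 (m + 1 + 1)%R == 0)%N.
Proof. by []. Qed.

Definition S_R (n : int) (p : nat) : fcpx R := @rfcpx (dimS n) (dimS_dd n) p.
Definition D_R (n : int) (p : nat) : fcpx R := @rfcpx (dimD n) (dimD_dd n) p.
Definition zero_fcpx : fcpx R := @rfcpx dim0 dim0_dd 0.

Lemma incl_c n m : (dimS (n + 1)%R m * dimD n (m + 1)%R == 0)%N.
Proof. by rewrite /dimS /dimD; case: (m =P n + 1) => [->|] //=; rewrite int2 int2'. Qed.

Definition incl_SD (n : int) (p : nat) : fmor (S_R (n + 1) p) (D_R n p) :=
  @rfmor _ _ _ _ p (incl_c n).

Definition zero_D (n : int) (p : nat) : fmor (@rfcpx dim0 dim0_dd p) (D_R n p) :=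
  @rfmor dim0 dim0_dd (dimD n) (dimD_dd n) p (fun m => eqxx 0%N).

Definition I_inj {M N : fcpx R} (f : fmor M N) :=
  forall (n : int) (p : nat), RLP (incl_SD n p) f.
Definition J_inj {M N : fcpx R} (f : fmor M N) :=
  forall (n : int) (p : nat), RLP (zero_D n p) f.

(* Trivial fibrations of the cofibrantly generated model structure:
   fibrations (= J-inj) that are weak equivalences. *)
Definition trivial_fibration {M N : fcpx R} (f : fmor M N) :=
  weq f /\ J_inj f.

End Defs.

Arguments RLP {R A B} i {M N} p.
Arguments weq {R M N} f.
Arguments surj_acyclic_ker {R M N} f.
Arguments I_inj {R M N} f.
Arguments J_inj {R M N} f.
Arguments trivial_fibration {R M N} f.
Arguments S_R {R} n p.
Arguments D_R {R} n p.
Arguments incl_SD {R} n p.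
Arguments zero_D {R} n p.

(** Morphisms out of [D_R(n,p)] are the elements of [F^p M^n] and morphisms out
   of [S_R(n+1,p)] are the cycles of [F^p M^(n+1)].  Hence [f] is [J]-injective
   iff every [F^k f] is surjective, and [f] is [I]-injective iff every cycle
   [m] of [F^p M^(n+1)] with [f m = d y], [y] in [F^p N^n], is [d x] for some
   [x] in [F^p M^n] with [f x = y].  A diagram chase in the short exact
   sequence [0 -> ker F^k f -> F^k M -> F^k N -> 0] shows that this lifting
   condition amounts to surjectivity plus acyclicity of the kernel, and that,
   given surjectivity, acyclicity of the kernel is equivalent to [f] being a
   weak equivalence. *)

From HB Require Import structures.
From mathcomp Require Import all_boot all_order all_algebra.
Set Implicit Arguments. Unset Strict Implicit. Unset Printing Implicit Defensive.
Import GRing.Theory.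
Local Open Scope ring_scope.

Arguments fil_lin {R f k n} a {x y} _ _.
Arguments fil_zero {R} f k n.
Arguments fil_d {R f k n x} _.
Arguments fil_dec {R f k n x} _.
Arguments fm_d {R M N} f n x.
Arguments fm_fil {R M N} f k n x _.
Arguments cdd {R} c n x.

Section FilteredComplexes.
Variable R : pzRingType.

Lemma forall_int_addr1 (P : int -> Prop) : (forall n, P (n + 1)) -> forall n, P n.
Proof. by move=> H n; have := H (n - 1); rewrite subrK. Qed.

Section Filtration.
Variable X : fcpx R.

Lemma filZ k n a (x : X n) : fil X k n x -> fil X k n (a *: x).
Proof. by move=> h; have := fil_lin a h (fil_zero X k n); rewrite addr0. Qed.

Lemma filD k n (x y : X n) : fil X k n x -> fil X k n y -> fil X k n (x + y).
Proof. by move=> hx hy; have := fil_lin 1 hx hy; rewrite scale1r. Qed.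

Lemma filB k n (x y : X n) : fil X k n x -> fil X k n y -> fil X k n (x - y).
Proof. by move=> hx /(filZ (-1)); rewrite scaleN1r; apply: filD. Qed.

Lemma fil_le k p n (x : X n) : (k <= p)%N -> fil X p n x -> fil X k n x.
Proof.
move=> /subnK <-; elim: (p - k)%N => //= d IH H.
by apply: IH; apply: fil_dec; rewrite -addSn.
Qed.

End Filtration.

Definition single (X : cpx R) (n : int) (x : X n) (m : int) : X m :=
  match @eqP _ n m with
  | ReflectT h => eq_rect n (fun k => (X k : Type)) x m h
  | ReflectF _ => 0
  end.

Lemma single_id (X : cpx R) n (x : X n) : single x n = x.
Proof. by rewrite /single; case: eqP => [h|[]//]; rewrite (eq_axiomK h). Qed.

Lemma single_ne (X : cpx R) n (x : X n) m : n != m -> single x m = 0.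
Proof. by rewrite /single; case: eqP => // ->; rewrite eqxx. Qed.

Lemma single_fil (X : fcpx R) k n (x : X n) m : fil X k n x -> fil X k m (single x m).
Proof. by rewrite /single; case: eqP => [h|_ _]; [case: m / h | apply: fil_zero]. Qed.

Lemma single_map (X Y : fcpx R) (f : fmor X Y) n (x : X n) m :
  fm f m (single x m) = single (fm f n x) m.
Proof. by rewrite /single; case: eqP => [h|_]; [case: m / h | apply: linear0]. Qed.

(** The image of the generator of [D_R(n,p)] under a map sending it to [x]. *)
Definition disk (X : cpx R) n (x : X n) m : X m := single x m + single (cd X n x) m.

Lemma disk_n (X : cpx R) n (x : X n) : disk x n = x.
Proof. by rewrite /disk single_id single_ne ?int1 ?addr0. Qed.

Lemma disk_n1 (X : cpx R) n (x : X n) : disk x (n + 1) = cd X n x.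
Proof. by rewrite /disk single_id single_ne ?add0r // eq_sym int1. Qed.

Lemma disk_map (X Y : fcpx R) (f : fmor X Y) n (x : X n) m :
  fm f m (disk x m) = disk (fm f n x) m.
Proof. by rewrite /disk linearD !(single_map f) fm_d. Qed.

Lemma disk_fil (X : fcpx R) k n (x : X n) m : fil X k n x -> fil X k m (disk x m).
Proof. by move=> h; apply: filD; apply: single_fil => //; apply: fil_d. Qed.

Definition rsum k (v : 'rV[R]_k) : R := \sum_(j < k) v 0 j.

Lemma rsumDZ k a (u v : 'rV[R]_k) : rsum (a *: u + v) = a * rsum u + rsum v.
Proof. by rewrite /rsum mulr_sumr -big_split; apply: eq_bigr => j _; rewrite !mxE. Qed.

Lemma rsum_dim0 k (v : 'rV[R]_k) : (k == 0)%N -> rsum v = 0.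
Proof. by case: k v => // v _; rewrite /rsum big_ord0. Qed.

Lemma rsum_const1 k : (k == 1)%N -> rsum (const_mx 1 : 'rV[R]_k) = 1.
Proof.
move=> /eqP ->; rewrite /rsum big_ord1; exact: mxE.
Qed.

Lemma rsum_mul_const1 k l (v : 'rV[R]_k) :
  rsum (v *m (const_mx 1 : 'M_(k, l))) = rsum v *+ l.
Proof.
rewrite /rsum (eq_bigr (fun _ => rsum v)) ?sumr_const ?card_ord // => j _.
by rewrite mxE; apply: eq_bigr => i _; rewrite mxE mulr1.
Qed.

Lemma rV_le1_rsum k (v : 'rV[R]_k) : (k <= 1)%N -> v = rsum v *: const_mx 1.
Proof.
case: k v => [|[|k]] v // _; first by apply/matrixP => i [].
by apply/rowP => j; rewrite !mxE /rsum big_ord1 mulr1 (ord1 j).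
Qed.

Section RsumMap.
Variables (X : cpx R) (dim : int -> nat) (e : forall m, X m) (m : int).

Definition rsum_map (v : 'rV[R]_(dim m)) : X m := rsum v *: e m.

Fact rsum_map_is_linear : linear rsum_map.
Proof. by move=> a u v; rewrite /rsum_map rsumDZ scalerDl scalerA. Qed.

HB.instance Definition _ :=
  GRing.isLinear.Build R 'rV[R]_(dim m) (X m) _ rsum_map rsum_map_is_linear.
End RsumMap.

Section RowMorphisms.
Variables (dim : int -> nat)
  (Hdim : forall m, (dim m * dim (m + 1)%R * dim (m + 1 + 1)%R == 0)%N) (p : nat).

(** A map out of [rfcpx dim p] is determined by the images [e m] of the
   all-ones vectors. *)
Definition rfcpx_mor (X : fcpx R) (e : forall m, X m)
    (e_d : forall m, dim m != 0%N -> e (m + 1) *+ dim (m + 1) = cd X m (e m))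
    (e_fil : forall m, dim m != 0%N -> fil X p m (e m)) :
  fmor (@rfcpx R dim Hdim p) X.
Proof.
refine (@FMor R (@rfcpx R dim Hdim p) X (fun m => @rsum_map X dim e m) _ _).
- move=> m v /=; rewrite /rsum_map rsum_mul_const1 linearZ /= -scalerMnl scalerMnr.
  have [/eqP h|h] := eqVneq (dim m) 0%N; first by rewrite (rsum_dim0 v h) !scale0r.
  by rewrite e_d.
- move=> k m v /= /orP [kp|/eqP ->]; last by rewrite linear0; apply: fil_zero.
  rewrite /rsum_map; have [/eqP h|h] := eqVneq (dim m) 0%N.
    by rewrite (rsum_dim0 v h) scale0r; apply: fil_zero.
  by apply: filZ; exact: fil_le kp (e_fil m h).
Defined.

Lemma rfcpx_morP (X : fcpx R) (g : fmor (@rfcpx R dim Hdim p) X) :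
  (forall m, dim m <= 1)%N ->
  forall m v, fm g m v = rsum v *: fm g m (const_mx 1).
Proof. by move=> Hd m v; rewrite {1}(rV_le1_rsum v (Hd m)) linearZ. Qed.

End RowMorphisms.

Definition zero_mor p (X : fcpx R) : fmor (@rfcpx R dim0 dim0_dd p) X.
Proof. by apply: (@rfcpx_mor dim0 dim0_dd p X (fun _ => 0)). Defined.

Lemma rfcpx_dim0_eq0 p m (v : @rfcpx R dim0 dim0_dd p m) : v = 0.
Proof. by apply/matrixP => i []. Qed.

Section DiskSphere.
Variables (n : int) (p : nat) (X : fcpx R).

Lemma D_R_gen_d : cd (@D_R R n p) n (const_mx 1) = const_mx 1.
Proof.
apply/matrixP => i j; rewrite !mxE (eq_bigr (fun _ => 1)) ?sumr_const ?card_ord.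
  by rewrite /dimD eqxx.
by move=> k _; rewrite !mxE mulr1.
Qed.

Lemma D_R_gen_fil k : (k <= p)%N -> fil (@D_R R n p) k n (const_mx 1).
Proof. by move=> h; rewrite /D_R /= h. Qed.

Definition D_R_mor (x : X n) (Hx : fil X p n x) : fmor (@D_R R n p) X.
Proof.
refine (@rfcpx_mor (dimD n) (dimD_dd n) p X (disk x) _ _).
- move=> m; rewrite /dimD; have [->|hn] := eqVneq m n.
    by rewrite int1 eqxx /= mulr1n disk_n1 disk_n.
  have [->|//] := eqVneq m (n + 1).
  by rewrite int2 int2' /= mulr0n disk_n1 cdd.
- by move=> m _; apply: disk_fil.
Defined.

Lemma D_R_morE (x : X n) (Hx : fil X p n x) m v :
  fm (D_R_mor Hx) m v = rsum v *: disk x m.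
Proof. by []. Qed.

Lemma D_R_mor_gen (x : X n) (Hx : fil X p n x) : fm (D_R_mor Hx) n (const_mx 1) = x.
Proof. by rewrite D_R_morE rsum_const1 ?scale1r ?disk_n // /dimD eqxx. Qed.

Lemma D_R_morP (g : fmor (@D_R R n p) X) m v :
  fm g m v = rsum v *: disk (fm g n (const_mx 1)) m.
Proof.
rewrite rfcpx_morP; last by move=> k; rewrite /dimD leq_b1.
have [e|hn] := eqVneq m n; first by subst m; rewrite disk_n.
have [e|hn'] := eqVneq m (n + 1); first by subst m; rewrite disk_n1 -fm_d D_R_gen_d.
by rewrite rsum_dim0 ?scale0r // /dimD (negbTE hn) (negbTE hn').
Qed.

Definition S_R_mor (a : X (n + 1)) (Ha : fil X p (n + 1) a) (Hc : cd X (n + 1) a = 0) :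
  fmor (@S_R R (n + 1) p) X.
Proof.
refine (@rfcpx_mor (dimS (n + 1)) (dimS_dd (n + 1)) p X (single a) _ _).
- move=> m; rewrite /dimS; have [->|//] := eqVneq m (n + 1).
  by rewrite int1 /= mulr0n single_id Hc.
- by move=> m _; apply: single_fil.
Defined.

Lemma S_R_morE (a : X (n + 1)) Ha Hc m v :
  fm (@S_R_mor a Ha Hc) m v = rsum v *: single a m.
Proof. by []. Qed.

Lemma S_R_morP (g : fmor (@S_R R (n + 1) p) X) m v :
  fm g m v = rsum v *: single (fm g (n + 1) (const_mx 1)) m.
Proof.
rewrite rfcpx_morP; last by move=> k; rewrite /dimS leq_b1.
have [e|hn] := eqVneq m (n + 1); first by subst m; rewrite single_id.
by rewrite rsum_dim0 ?scale0r // /dimS (negbTE hn).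
Qed.

Lemma S_R_mor_cycle (g : fmor (@S_R R (n + 1) p) X) :
  cd X (n + 1) (fm g (n + 1) (const_mx 1)) = 0.
Proof. by rewrite -fm_d S_R_morP single_ne ?scaler0 // eq_sym int1. Qed.

Lemma D_R_mor_incl (g : fmor (@D_R R n p) X) m v :
  fm g m (fm (@incl_SD R n p) m v) = rsum v *: single (cd X n (fm g n (const_mx 1))) m.
Proof.
rewrite D_R_morP rsum_mul_const1; have [e|hm] := eqVneq m (n + 1).
  by subst m; rewrite disk_n1 single_id /dimD int1 eqxx.
by rewrite rsum_dim0 ?mul0rn ?scale0r ?single_ne // ?/dimS (negbTE hm) // eq_sym.
Qed.

End DiskSphere.

(** * Lifting properties as conditions on the filtration pieces *)

Section LiftingProperties.
Variables (M N : fcpx R) (f : fmor M N).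

Definition fil_surj :=
  forall k n (y : N n), fil N k n y -> exists x : M n, fil M k n x /\ fm f n x = y.

Definition ker_acyclic :=
  forall k n (x : M (n + 1)), fil M k (n + 1) x -> fm f (n + 1) x = 0 ->
    cd M (n + 1) x = 0 ->
    exists z : M n, [/\ fil M k n z, fm f n z = 0 & cd M n z = x].

Definition boundary_lifting :=
  forall n p (m : M (n + 1)) (y : N n),
    fil M p (n + 1) m -> cd M (n + 1) m = 0 -> fil N p n y ->
    fm f (n + 1) m = cd N n y ->
    exists x : M n, [/\ fil M p n x, cd M n x = m & fm f n x = y].

Lemma J_injP : J_inj f <-> fil_surj.
Proof.
split=> [HJ k n y Hy | Hs n p a b _].
  have [|h [_ Hh]] := HJ n k (zero_mor k M) (D_R_mor Hy).
    by move=> m v; rewrite (rfcpx_dim0_eq0 v) !linear0.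
  exists (fm h n (const_mx 1)); split; first by apply: fm_fil; apply: D_R_gen_fil.
  by rewrite Hh D_R_mor_gen.
have [|x [Hx fx]] := Hs p n (fm b n (const_mx 1)).
  by apply: fm_fil; apply: D_R_gen_fil.
exists (D_R_mor Hx); split=> m v; first by rewrite (rfcpx_dim0_eq0 v) !linear0.
by rewrite D_R_morE [RHS]D_R_morP linearZZ disk_map fx.
Qed.

Lemma I_injP : I_inj f <-> boundary_lifting.
Proof.
have dimS_n1 n : dimS (n + 1) (n + 1) == 1%N by rewrite /dimS eqxx.
split=> [HI n p m y Hm dm Hy fm_dy | HL n p a b Hab].
  have [|h [ha hb]] := HI n p (S_R_mor Hm dm) (D_R_mor Hy).
    by move=> k v; rewrite S_R_morE linearZZ single_map D_R_mor_incl D_R_mor_gen fm_dy.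
  exists (fm h n (const_mx 1)); split.
  - by apply: fm_fil; apply: D_R_gen_fil.
  - have := ha (n + 1) (const_mx 1).
    by rewrite S_R_morE D_R_mor_incl rsum_const1 // !scale1r !single_id.
  - by have := hb n (const_mx 1); rewrite D_R_mor_gen.
have Ha : fil M p (n + 1) (fm a (n + 1) (const_mx 1)).
  by apply: fm_fil; rewrite /S_R /= leqnn.
have Hb : fil N p n (fm b n (const_mx 1)) by apply: fm_fil; apply: D_R_gen_fil.
have fa_db : fm f (n + 1) (fm a (n + 1) (const_mx 1)) = cd N n (fm b n (const_mx 1)).
  by have := Hab (n + 1) (const_mx 1); rewrite D_R_mor_incl rsum_const1 // scale1r single_id.
have [x [Hx dx fx]] := HL n p _ _ Ha (S_R_mor_cycle a) Hb fa_db.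
exists (D_R_mor Hx); split=> k v.
  by rewrite D_R_mor_incl D_R_mor_gen dx -S_R_morP.
by rewrite D_R_morE [RHS]D_R_morP linearZZ disk_map fx.
Qed.

Lemma weq_boundary_in_ker : weq f -> fil_surj ->
  forall k n (z : M n), fil M k n z -> fm f (n + 1) (cd M n z) = 0 ->
  exists z', [/\ fil M k n z', fm f n z' = 0 & cd M n z' = cd M n z].
Proof.
move=> W S k; apply: forall_int_addr1 => n z Hz fdz.
have Hfz : fil N k (n + 1) (fm f (n + 1) z) by apply: fm_fil.
have dfz : cd N (n + 1) (fm f (n + 1) z) = 0 by rewrite -fm_d.
have [u [w [Hu du Hw fz_u]]] := (W k n).2 _ Hfz dfz.
have [v [Hv fv]] := S k n w Hw.
exists (z - u - cd M n v); split.
- by apply: filB; [apply: filB | apply: fil_d].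
- by rewrite !linearB fz_u fm_d fv -addrA -opprD subrr.
- by rewrite !linearB du cdd !subr0.
Qed.

Lemma weq_ker_acyclic : weq f -> fil_surj -> ker_acyclic.
Proof.
move=> W S k n x Hx fx dx.
have fx_d0 : fm f (n + 1) x = cd N n 0 by rewrite fx !linear0.
have [z [Hz dz]] := (W k n).1 x Hx dx 0 (fil_zero N k n) fx_d0.
have [|z' [Hz' fz' dz']] := weq_boundary_in_ker W S Hz; first by rewrite dz.
by exists z'; rewrite dz' dz.
Qed.

Lemma surj_ker_acyclic_lifting : fil_surj -> ker_acyclic -> boundary_lifting.
Proof.
move=> S A n p m y Hm dm Hy fm_dy.
have [v [Hv fv]] := S p n y Hy.
have f_mdv : fm f (n + 1) (m - cd M n v) = 0 by rewrite linearB fm_d fv fm_dy subrr.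
have d_mdv : cd M (n + 1) (m - cd M n v) = 0 by rewrite linearB dm cdd subrr.
have [z [Hz fz dz]] := A p n _ (filB Hm (fil_d Hv)) f_mdv d_mdv.
exists (z + v); split; first exact: filD.
  by rewrite linearD dz subrK.
by rewrite linearD fz add0r.
Qed.

Lemma surj_ker_acyclic_weq : fil_surj -> ker_acyclic -> weq f.
Proof.
move=> S A p n; split=> [x Hx dx y Hy fx | y Hy dy].
  have [z [Hz dz _]] := surj_ker_acyclic_lifting S A Hx dx Hy fx.
  by exists z.
have [x [Hx fx]] := S p (n + 1) y Hy.
have fdx : fm f (n + 1 + 1) (cd M (n + 1) x) = 0 by rewrite fm_d fx dy.
have [z [Hz fz dz]] := A p (n + 1) _ (fil_d Hx) fdx (cdd M (n + 1) x).
exists (x - z), 0; split.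
- exact: filB.
- by rewrite linearB dz subrr.
- exact: fil_zero.
- by rewrite linear0 addr0 linearB fz subr0 fx.
Qed.

Lemma lifting_surj_ker_acyclic : boundary_lifting -> fil_surj /\ ker_acyclic.
Proof.
move=> L; split=> [k n y Hy | k n x Hx fx dx].
  have f0 : fm f (n + 1 + 1) 0 = cd N (n + 1) (cd N n y) by rewrite linear0 cdd.
  have [x' [Hx' dx' fx']] :=
    L (n + 1) k 0 (cd N n y) (fil_zero M k _) (linear0 _) (fil_d Hy) f0.
  have [x [Hx _ fx]] := L n k x' y Hx' dx' Hy fx'.
  by exists x.
have fx_d0 : fm f (n + 1) x = cd N n 0 by rewrite fx linear0.
have [z [Hz dz fz]] := L n k x 0 Hx dx (fil_zero N k n) fx_d0.
by exists z.
Qed.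

Lemma boundary_liftingP : boundary_lifting <-> fil_surj /\ ker_acyclic.
Proof.
split; first exact: lifting_surj_ker_acyclic.
by case; apply: surj_ker_acyclic_lifting.
Qed.

Lemma surj_acyclic_kerE : surj_acyclic_ker f <-> fil_surj /\ ker_acyclic.
Proof.
split=> [H | [S A] k]; last by split; [apply: S | apply: A].
by split=> k; [apply: (H k).1 | apply: (H k).2].
Qed.

End LiftingProperties.

End FilteredComplexes.

Theorem proposition1p20 (R : comPzRingType) (M N : fcpx R) (f : fmor M N) :
  (trivial_fibration f <-> surj_acyclic_ker f) /\
  (weq f /\ J_inj f <-> I_inj f).
Proof.
have weq_J_inj : weq f /\ J_inj f <-> fil_surj f /\ ker_acyclic f.
  split=> [[W /J_injP S] | [S A]]; first by split; last apply: weq_ker_acyclic.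
  by split; [apply: surj_ker_acyclic_weq | apply/J_injP].
have := surj_acyclic_kerE f; have := I_injP f; have := boundary_liftingP f.
rewrite /trivial_fibration; tauto.
Qed.
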